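(* In the setting of the context, assume $q<q_c$. Then $\lim_{\hat q\to q,\ \hat q\in[0,q_c)}\hat P=P$, where $P$ and $\hat P$ are the positive definite solutions of the modified Riccati equations with parameters $q$ and $\hat q$ respectively.
   Context: Let $A\in\mathbb{R}^{n\times n}$, $B\in\mathbb{R}^{n\times m}$ with $(A,B)$ stabilizable, and let $Q$, $R$ be symmetric positive definite, and $q\in(0,1)$. For $p\in[0,1)$ the modified Riccati equation with parameter $p$ is $X=Q+A^\top XA-(1-p)A^\top XB(R+B^\top XB)^{-1}B^\top XA$; $q_c$ is the critical loss probability such that for every $p\in[0,q_c)$ this equation has a unique positive definite solution. *)

From HB Require Import structures.
From mathcomp Require Import all_boot all_order all_algebra.
From mathcomp Require Import complex.
From mathcomp Require Import all_classical all_reals all_analysis.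
Set Implicit Arguments. Unset Strict Implicit. Unset Printing Implicit Defensive.
Import Order.TTheory GRing.Theory Num.Theory.
Local Open Scope ring_scope.

Definition cmx (R : rcfType) (n : nat) (M : 'M[R]_n) : 'M[R[i]]_n :=
  map_mx (fun x : R => (x%:C)%C) M.

Definition is_eigenvalue (R : rcfType) (n : nat) (M : 'M[R]_n) (lam : R[i]) : Prop :=
  exists v : 'cV[R[i]]_n, v != 0 /\ cmx M *m v = lam *: v.

Definition schur_stable (R : rcfType) (n : nat) (M : 'M[R]_n) : Prop :=
  forall lam : R[i], is_eigenvalue M lam -> `|lam| < 1.

Definition stabilizable (R : rcfType) (n m : nat) (A : 'M[R]_n) (B : 'M[R]_(n, m)) : Prop :=
  exists K : 'M[R]_(m, n), schur_stable (A + B *m K).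

Definition sym_mx (R : rcfType) (n : nat) (X : 'M[R]_n) : Prop := X^T = X.

Definition posdef (R : rcfType) (n : nat) (X : 'M[R]_n) : Prop :=
  sym_mx X /\ forall x : 'cV[R]_n, x != 0 -> 0 < (x^T *m X *m x) 0 0.

Definition mod_riccati (R : rcfType) (n m : nat) (A : 'M[R]_n) (B : 'M[R]_(n, m))
    (Q : 'M[R]_n) (Rw : 'M[R]_m) (p : R) (X : 'M[R]_n) : Prop :=
  X = Q + A^T *m X *m A
        - (1 - p) *: (A^T *m X *m B *m invmx (Rw + B^T *m X *m B) *m B^T *m X *m A).

Definition pd_solution (R : rcfType) (n m : nat) (A : 'M[R]_n) (B : 'M[R]_(n, m))
    (Q : 'M[R]_n) (Rw : 'M[R]_m) (p : R) (X : 'M[R]_n) : Prop :=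
  posdef X /\ mod_riccati A B Q Rw p X.

From HB Require Import structures.
From mathcomp Require Import all_boot all_order all_algebra.
From mathcomp Require Import complex.
From mathcomp Require Import all_classical all_reals all_analysis.
From mathcomp Require Import ring lra.
Set Implicit Arguments.
Unset Strict Implicit.
Unset Printing Implicit Defensive.

Import Order.TTheory GRing.Theory Num.Theory numFieldNormedType.Exports.
Local Open Scope classical_set_scope.
Local Open Scope ring_scope.

(** The Riccati equation with parameter [p] says that [X] is the optimal
    cost of the policy that applies a gain [K] with probability [1 - p] and
    no input with probability [p]; completing the square in [K] shows that
    the optimal gain of [X] is [ric_gain X].  If [X] and [Y] solve the
    equation with parameters [s >= t], comparing both with the gain of [Y]
    turns [X - Y] into a subsolution of the positive operator
    [f |-> t f(A x) + (1 - t) f((A + B K) x)] with source term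
    [(s - t) x^T A^T X A x], for which [Y] is a supersolution with source
    [x^T Q x].  Iterating the operator gives [X - Y <= (s - t) c Y], the
    iterates of [Q] being the terms of a series bounded by [Y].  Hence the
    solutions are monotone and Lipschitz in the parameter as quadratic
    forms, and polarization bounds the entries of [P - Phat p] by
    [|p - q|]. *)

Section QuadraticForms.
Context {R : realType}.

Definition bform {n} (M : 'M[R]_n) (u v : 'cV[R]_n) : R := (u^T *m M *m v) 0 0.
Definition qform {n} (M : 'M[R]_n) (x : 'cV[R]_n) : R := bform M x x.

Lemma bformDl n (M : 'M[R]_n) u1 u2 v : bform M (u1 + u2) v = bform M u1 v + bform M u2 v.
Proof. by rewrite /bform linearD /= !mulmxDl mxE. Qed.

Lemma bformDr n (M : 'M[R]_n) u v1 v2 : bform M u (v1 + v2) = bform M u v1 + bform M u v2.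
Proof. by rewrite /bform mulmxDr mxE. Qed.

Lemma bformNl n (M : 'M[R]_n) u v : bform M (- u) v = - bform M u v.
Proof. by rewrite /bform linearN /= !mulNmx mxE. Qed.

Lemma bformNr n (M : 'M[R]_n) u v : bform M u (- v) = - bform M u v.
Proof. by rewrite /bform mulmxN mxE. Qed.

Lemma bformZl n (M : 'M[R]_n) a u v : bform M (a *: u) v = a * bform M u v.
Proof. by rewrite /bform linearZ /= -!scalemxAl mxE. Qed.

Lemma bformZr n (M : 'M[R]_n) a u v : bform M u (a *: v) = a * bform M u v.
Proof. by rewrite /bform -scalemxAr mxE. Qed.

Lemma bformMDl n (M1 M2 : 'M[R]_n) u v : bform (M1 + M2) u v = bform M1 u v + bform M2 u v.
Proof. by rewrite /bform mulmxDr mulmxDl mxE. Qed.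

Lemma bformMNl n (M : 'M[R]_n) u v : bform (- M) u v = - bform M u v.
Proof. by rewrite /bform mulmxN mulNmx mxE. Qed.

Lemma bformMZl n (M : 'M[R]_n) a u v : bform (a *: M) u v = a * bform M u v.
Proof. by rewrite /bform -scalemxAr -scalemxAl mxE. Qed.

Lemma bformC n (M : 'M[R]_n) u v : M^T = M -> bform M u v = bform M v u.
Proof.
move=> symM; rewrite /bform -[in LHS](trmxK (u^T *m M *m v)) mxE.
by rewrite !trmx_mul trmxK symM mulmxA.
Qed.

Lemma bform_conj k l (M : 'M[R]_k) (C : 'M[R]_(k, l)) u v :
  bform (C^T *m M *m C) u v = bform M (C *m u) (C *m v).
Proof. by rewrite /bform trmx_mul !mulmxA. Qed.

Lemma qform_conj k l (M : 'M[R]_k) (C : 'M[R]_(k, l)) x :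
  qform (C^T *m M *m C) x = qform M (C *m x).
Proof. exact: bform_conj. Qed.

Lemma bform_mulmxr n (M C : 'M[R]_n) u v : bform M u (C *m v) = bform (M *m C) u v.
Proof. by rewrite /bform !mulmxA. Qed.

Lemma bform_delta n (M : 'M[R]_n) i j : bform M (delta_mx i 0) (delta_mx j 0) = M i j.
Proof. by rewrite /bform trmx_delta -rowE -colE !mxE. Qed.

Lemma qformD n (M : 'M[R]_n) u v :
  qform M (u + v) = qform M u + qform M v + bform M u v + bform M v u.
Proof. rewrite /qform bformDl !bformDr; ring. Qed.

Lemma qformN n (M : 'M[R]_n) u : qform M (- u) = qform M u.
Proof. by rewrite /qform bformNl bformNr opprK. Qed.

Lemma qform0 n (M : 'M[R]_n) : qform M 0 = 0.
Proof. by rewrite /qform /bform mulmx0 mxE. Qed.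

Lemma qformMB n (M1 M2 : 'M[R]_n) x : qform (M1 - M2) x = qform M1 x - qform M2 x.
Proof. by rewrite /qform bformMDl bformMNl. Qed.

Lemma qformE n (M : 'M[R]_n) x : qform M x = \sum_i \sum_j x i 0 * M i j * x j 0.
Proof.
rewrite /qform /bform mxE exchange_big /=; apply: eq_bigr => i _.
rewrite mxE big_distrl /=; apply: eq_bigr => j _.
by rewrite !mxE.
Qed.

Lemma posdef_qform_ge0 n (M : 'M[R]_n) x : posdef M -> 0 <= qform M x.
Proof. by case=> _ posM; have [->|/posM/ltW] := eqVneq x 0; rewrite ?qform0. Qed.

Lemma qform_gt0_unitmx n (M : 'M[R]_n) :
  (forall x, x != 0 -> 0 < qform M x) -> M \in unitmx.
Proof.
move=> posM; rewrite unitmxE unitfE; apply/negP => /det0P [v v0 vM].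
have : v^T != 0 by rewrite -(inj_eq (@trmx_inj _ _ _)) trmxK linear0.
by move/posM; rewrite /qform /bform trmxK vM mul0mx mxE ltxx.
Qed.

Lemma posdef_unitmx n (M : 'M[R]_n) : posdef M -> M \in unitmx.
Proof. by case=> _; apply: qform_gt0_unitmx. Qed.

(* Cauchy-Schwarz for the inner product of Q, applied to x and Q^-1 e_i. *)
Lemma coord_sqr_le_posdef n (Q : 'M[R]_n) (i : 'I_n) : posdef Q ->
  exists2 g : R, 0 < g & forall x : 'cV[R]_n, x i 0 ^+ 2 <= g * qform Q x.
Proof.
move=> pdQ; pose y : 'cV[R]_n := invmx Q *m delta_mx i 0.
have Qy : Q *m y = delta_mx i 0 by rewrite mulKVmx // posdef_unitmx.
have y_neq0 : y != 0.
  apply: contra_neq (@oner_neq0 R) => y0; move/matrixP/(_ i 0): Qy.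
  by rewrite y0 mulmx0 !mxE !eqxx.
have Qy_gt0 : 0 < qform Q y by exact: pdQ.2.
exists (qform Q y) => // x.
have bform_yx : bform Q y x = x i 0.
  by rewrite (bformC _ _ pdQ.1) /bform -mulmxA Qy -colE !mxE.
set s := x i 0 / qform Q y.
have s_Qy : s * qform Q y = x i 0 by rewrite /s mulfVK // gt_eqF.
have := posdef_qform_ge0 (s *: y - x) pdQ.
rewrite qformD qformN /qform bformZl bformZr bformNr bformNl bformZr bformZl.
rewrite -/(qform Q y) -/(qform Q x) (bformC x _ pdQ.1) bform_yx.
nra.
Qed.

Lemma qform_le_posdef n (Q M : 'M[R]_n) : posdef Q ->
  exists2 c, 0 <= c & forall x, qform M x <= c * qform Q x.
Proof.
move=> pdQ.
have [g g_gt0 g_bound] : exists2 g : 'I_n -> R, forall i, 0 < g i &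
    forall i (x : 'cV[R]_n), x i 0 ^+ 2 <= g i * qform Q x.
  have /fin_all_exists [g gP] i : exists g : R,
      0 < g /\ forall x : 'cV[R]_n, x i 0 ^+ 2 <= g * qform Q x.
    by have [g g_gt0 gP] := coord_sqr_le_posdef i pdQ; exists g.
  by exists g => i; have [] := gP i.
exists (\sum_i \sum_j `|M i j| * (g i + g j)).
  by do 2!apply: sumr_ge0 => ? _; rewrite mulr_ge0 // addr_ge0 // ltW.
move=> x; rewrite qformE mulr_suml; apply: ler_sum => i _.
rewrite mulr_suml; apply: ler_sum => j _.
have xi2 := g_bound i x; have xj2 := g_bound j x.
have Qx_ge0 := posdef_qform_ge0 x pdQ.
set a := x i 0 in xi2 *; set b := x j 0 in xj2 *.
have ab_le : `|a * b| <= a ^+ 2 + b ^+ 2.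
  rewrite normrM -[a ^+ 2]real_normK ?num_real // -[b ^+ 2]real_normK ?num_real //.
  have := normr_ge0 a; have := normr_ge0 b; nra.
apply: le_trans (_ : `|M i j| * `|a * b| <= _).
  by apply: le_trans (ler_norm _) _; rewrite !normrM mulrAC mulrC.
rewrite -mulrA ler_wpM2l //; apply: (le_trans ab_le); nra.
Qed.

Lemma entry_le_qform n (D P : 'M[R]_n) k i j : D^T = D ->
  (forall x, `|qform D x| <= k * qform P x) ->
  `|D i j| <= k * (qform P (delta_mx i 0 + delta_mx j 0)
                   + qform P (delta_mx i 0) + qform P (delta_mx j 0)).
Proof.
move=> symD D_le.
have Dji : D j i = D i j by rewrite -[in LHS]symD mxE.
have polar : qform D (delta_mx i 0 + delta_mx j 0)
    = qform D (delta_mx i 0) + qform D (delta_mx j 0) + 2 * D i j.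
  by rewrite qformD /qform !bform_delta Dji; ring.
have := D_le (delta_mx i 0 + delta_mx j 0); rewrite polar.
have := D_le (delta_mx i 0); have := D_le (delta_mx j 0).
rewrite !ler_norml => /andP[? ?] /andP[? ?] /andP[? ?].
apply/andP; split; nra.
Qed.

Lemma mx_norm_le_qform n (P : 'M[R]_n) : posdef P ->
  exists2 C, 0 <= C & forall (D : 'M[R]_n) k, D^T = D -> 0 <= k ->
    (forall x, `|qform D x| <= k * qform P x) -> `|D| <= k * C.
Proof.
move=> pdP; pose f (ij : 'I_n * 'I_n) := qform P (delta_mx ij.1 0 + delta_mx ij.2 0)
  + qform P (delta_mx ij.1 0) + qform P (delta_mx ij.2 0).
exists (\big[Num.max/0]_ij f ij) => [|D k symD k_ge0 D_le].
  exact: bigmax_ge_id.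
rewrite -[`|D|]/(mx_norm D) mx_normrE.
apply: bigmax_le => [|ij _]; first by rewrite mulr_ge0 // bigmax_ge_id.
apply: le_trans (entry_le_qform ij.1 ij.2 symD D_le) _.
by rewrite ler_wpM2l // (le_bigmax 0 f ij).
Qed.

End QuadraticForms.

Section ComparisonPrinciple.
Context {R : realType} {V : Type}.
Variables (a1 a2 : V -> V) (w1 w2 : R).
Hypotheses (w1_ge0 : 0 <= w1) (w2_ge0 : 0 <= w2).

Definition lyap (f : V -> R) : V -> R := fun x => w1 * f (a1 x) + w2 * f (a2 x).

Lemma lyap_ge0 f : (forall x, 0 <= f x) -> forall x, 0 <= lyap f x.
Proof. by move=> f_ge0 x; rewrite /lyap addr_ge0 // mulr_ge0. Qed.

Lemma iter_lyap_ge0 k f : (forall x, 0 <= f x) -> forall x, 0 <= iter k lyap f x.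
Proof. by move=> f_ge0; elim: k => [|k IHk] //=; apply: lyap_ge0. Qed.

Variables (g z d : V -> R) (e c : R).
Hypotheses (g_ge0 : forall x, 0 <= g x) (z_ge0 : forall x, 0 <= z x)
  (z_super : forall x, g x + lyap z x <= z x)
  (d_sub : forall x, d x <= lyap d x + e * g x)
  (d_le : forall x, d x <= c * g x) (e_ge0 : 0 <= e) (c_ge0 : 0 <= c).

Let T k := iter k lyap g.
Let S k x := \sum_(j < k) T j x.

Lemma lyap_partial_sumS k x : S k.+1 x = g x + lyap (S k) x.
Proof.
rewrite /S big_ord_recl /lyap !mulr_sumr -big_split.
by congr (_ + _); apply: eq_bigr.
Qed.

Lemma lyap_sub_le_partial_sum k x : d x <= e * S k x + c * T k x.
Proof.
elim: k x => [|k IHk] x; first by rewrite /S big_ord0 mulr0 add0r.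
apply: le_trans (d_sub x) _.
rewrite lyap_partial_sumS [T _ _]/= /lyap.
have := ler_wpM2l w1_ge0 (IHk (a1 x)); have := ler_wpM2l w2_ge0 (IHk (a2 x)).
lra.
Qed.

Lemma lyap_partial_sum_iter_le k x : S k x + iter k lyap z x <= z x.
Proof.
elim: k x => [|k IHk] x; first by rewrite /S big_ord0 add0r.
apply: le_trans (z_super x); rewrite lyap_partial_sumS [iter _ _ _ _]/= /lyap.
have := ler_wpM2l w1_ge0 (IHk (a1 x)); have := ler_wpM2l w2_ge0 (IHk (a2 x)).
lra.
Qed.

Lemma lyap_partial_sum_le k x : S k x <= z x.
Proof.
by apply: le_trans (lyap_partial_sum_iter_le k x); rewrite lerDl iter_lyap_ge0.
Qed.

Lemma iter_lyap_small x eps : 0 < eps -> exists k, T k x <= eps.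
Proof.
move=> eps_gt0; apply/not_existsP => T_gt.
have {}T_gt k : eps < T k x by rewrite ltNge; apply/negP => /(T_gt k).
have zeps_ge0 : 0 <= z x / eps by rewrite divr_ge0 // ltW.
set N := Num.Def.archi_bound (z x / eps).
have : z x / eps < N%:R := archi_boundP zeps_ge0.
rewrite ltr_pdivrMr // => z_lt; apply/negP: z_lt; rewrite -leNgt.
apply: le_trans (_ : S N x <= _).
  rewrite /S mulr_natl -[in X in X <= _](card_ord N) -sumr_const.
  by apply: ler_sum => j _; exact: ltW.
exact: lyap_partial_sum_le.
Qed.

Lemma lyap_comparison x : d x <= e * z x.
Proof.
apply/ler_addgt0Pr => eps eps_gt0.
have c1_gt0 : 0 < c + 1 by rewrite ltr_wpDl.
have [k Tk_le] := iter_lyap_small x (divr_gt0 eps_gt0 c1_gt0).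
rewrite ler_pdivlMr // in Tk_le.
have := lyap_sub_le_partial_sum k x.
have := ler_wpM2l e_ge0 (lyap_partial_sum_le k x).
have : 0 <= T k x by exact: iter_lyap_ge0.
nra.
Qed.

End ComparisonPrinciple.

Section RiccatiMinimization.
Context {R : realType}.
Variables (n m : nat) (A : 'M[R]_n) (B : 'M[R]_(n, m)) (Rw : 'M[R]_m).
Hypothesis pdRw : posdef Rw.

Definition ric_S (Y : 'M[R]_n) := Rw + B^T *m Y *m B.
Definition ric_gain (Y : 'M[R]_n) := - (invmx (ric_S Y) *m (B^T *m Y *m A)).
Definition ric_W (Y : 'M[R]_n) :=
  A^T *m Y *m B *m invmx (ric_S Y) *m B^T *m Y *m A.

Variable Y : 'M[R]_n.
Hypothesis pdY : posdef Y.

Lemma qform_ric_S v : qform (ric_S Y) v = qform Rw v + qform Y (B *m v).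
Proof. by rewrite /qform /ric_S bformMDl bform_conj. Qed.

Lemma ric_S_sym : (ric_S Y)^T = ric_S Y.
Proof. by rewrite /ric_S linearD /= !trmx_mul trmxK pdRw.1 pdY.1 mulmxA. Qed.

Lemma ric_S_ge0 v : 0 <= qform (ric_S Y) v.
Proof. by rewrite qform_ric_S addr_ge0 // posdef_qform_ge0. Qed.

Lemma ric_S_unit : ric_S Y \in unitmx.
Proof.
apply: qform_gt0_unitmx => v v_neq0; rewrite qform_ric_S.
by rewrite ltr_pwDl ?posdef_qform_ge0 // pdRw.2.
Qed.

Lemma qform_ric_S_inv y :
  qform (ric_S Y) (invmx (ric_S Y) *m y) = qform (invmx (ric_S Y)) y.
Proof.
by rewrite /qform -bform_conj trmx_inv ric_S_sym mulVmx ?mul1mx // ric_S_unit.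
Qed.

Lemma qform_ric_W x :
  qform (ric_W Y) x = qform (invmx (ric_S Y)) (B^T *m Y *m A *m x).
Proof.
rewrite /qform -bform_conj; congr bform.
by rewrite /ric_W !trmx_mul trmxK pdY.1 !mulmxA.
Qed.

Lemma ric_W_ge0 x : 0 <= qform (ric_W Y) x.
Proof. by rewrite qform_ric_W -qform_ric_S_inv ric_S_ge0. Qed.

Lemma ric_completion_sqr K x :
  qform Y (A *m x) - qform (ric_W Y) x + qform (ric_S Y) ((K - ric_gain Y) *m x)
  = qform Y ((A + B *m K) *m x) + qform Rw (K *m x).
Proof.
have -> : (K - ric_gain Y) *m x = K *m x + invmx (ric_S Y) *m (B^T *m Y *m A *m x).
  by rewrite /ric_gain opprK mulmxDl !mulmxA.
have -> : (A + B *m K) *m x = A *m x + B *m (K *m x) by rewrite mulmxDl mulmxA.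
set v := K *m x.
rewrite !qformD qform_ric_S_inv -qform_ric_W qform_ric_S.
have cross : bform (ric_S Y) v (invmx (ric_S Y) *m (B^T *m Y *m A *m x))
    = bform Y (A *m x) (B *m v).
  rewrite bform_mulmxr mulmxV ?ric_S_unit // (bformC _ _ pdY.1).
  by rewrite /bform mulmx1 !trmx_mul !mulmxA.
rewrite [bform _ (invmx _ *m _) v](bformC _ _ ric_S_sym) cross.
rewrite [bform Y (B *m v) _](bformC _ _ pdY.1).
ring.
Qed.

Lemma ric_cost_ge K x :
  qform Y (A *m x) - qform (ric_W Y) x <= qform Y ((A + B *m K) *m x) + qform Rw (K *m x).
Proof. by rewrite -ric_completion_sqr lerDl ric_S_ge0. Qed.

Lemma ric_cost_gain x :
  qform Y (A *m x) - qform (ric_W Y) x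
  = qform Y ((A + B *m ric_gain Y) *m x) + qform Rw (ric_gain Y *m x).
Proof. by rewrite -ric_completion_sqr subrr mul0mx qform0 addr0. Qed.

End RiccatiMinimization.

Section RiccatiSolutions.
Context {R : realType}.
Variables (n m : nat) (A : 'M[R]_n) (B : 'M[R]_(n, m)) (Q : 'M[R]_n) (Rw : 'M[R]_m).
Hypotheses (pdQ : posdef Q) (pdRw : posdef Rw).

Local Notation sol := (pd_solution A B Q Rw).

Lemma qform_mod_riccati p X x : mod_riccati A B Q Rw p X ->
  qform X x = qform Q x + qform X (A *m x) - (1 - p) * qform (ric_W A B Rw X) x.
Proof.
move=> ricX; rewrite {1}ricX.
by rewrite qformMB /qform bformMDl bformMZl bform_conj.
Qed.

Lemma riccati_sol_le_cost p X K x : p <= 1 -> sol p X ->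
  qform X x <= qform Q x + p * qform X (A *m x)
    + (1 - p) * (qform X ((A + B *m K) *m x) + qform Rw (K *m x)).
Proof.
move=> p_le1 [pdX ricX]; rewrite (qform_mod_riccati x ricX).
have := ric_cost_ge A B pdRw pdX K x.
have : 0 <= 1 - p by rewrite subr_ge0.
nra.
Qed.

Lemma riccati_sol_ge_cost r p X x : r <= p -> sol p X ->
  qform Q x + r * qform X (A *m x)
    + (1 - r) * (qform X ((A + B *m ric_gain A B Rw X) *m x)
                 + qform Rw (ric_gain A B Rw X *m x))
  <= qform X x.
Proof.
move=> rp [pdX ricX]; rewrite -(ric_cost_gain A B pdRw pdX) (qform_mod_riccati x ricX).
have : 0 <= p - r by rewrite subr_ge0.
have := ric_W_ge0 A B pdRw pdX x.
nra.
Qed.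

Lemma riccati_sol_sub_le r s t X Y c : 0 <= r -> r <= s -> r <= t -> s <= 1 ->
  sol s X -> sol t Y -> 0 <= c -> (forall y, qform X (A *m y) <= c * qform Q y) ->
  forall x, qform X x - qform Y x <= (s - r) * c * qform Y x.
Proof.
move=> r_ge0 rs rt s_le1 solX solY c_ge0 XA_le x.
have [sr_ge0 r1_ge0] : 0 <= s - r /\ 0 <= 1 - r by rewrite !subr_ge0 rs (le_trans rs).
pose K := ric_gain A B Rw Y.
pose a1 (y : 'cV_n) := A *m y; pose a2 (y : 'cV_n) := (A + B *m K) *m y.
pose d y := qform X y - qform Y y.
have Q_ge0 y := posdef_qform_ge0 y pdQ.
have Y_ge0 y := posdef_qform_ge0 y solY.1.
have X_ge0 y := posdef_qform_ge0 y solX.1.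
have Rw_ge0 y := posdef_qform_ge0 y pdRw.
have Y_super y : qform Q y + lyap a1 a2 r (1 - r) (qform Y) y <= qform Y y.
  have := riccati_sol_ge_cost y rt solY; have := mulr_ge0 r1_ge0 (Rw_ge0 (K *m y)).
  rewrite /lyap /a1 /a2 -/K; lra.
have d_sub y : d y <= lyap a1 a2 r (1 - r) d y + (s - r) * c * qform Q y.
  have := riccati_sol_le_cost K y s_le1 solX; have := riccati_sol_ge_cost y rt solY.
  have := mulr_ge0 sr_ge0 (X_ge0 (a2 y)); have := mulr_ge0 sr_ge0 (Rw_ge0 (K *m y)).
  have := ler_wpM2l sr_ge0 (XA_le y).
  rewrite /lyap /d /a1 /a2 -/K; nra.
have [c2 c2_ge0 X_le] := qform_le_posdef X pdQ.
have d_le y : d y <= c2 * qform Q y.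
  by apply: le_trans (X_le y); rewrite /d gerBl.
exact: (lyap_comparison r_ge0 r1_ge0 Q_ge0 Y_ge0 Y_super d_sub d_le
          (mulr_ge0 sr_ge0 c_ge0) c2_ge0 x).
Qed.

Lemma riccati_sol_mono s t X Y : 0 <= s -> s <= t -> t <= 1 -> sol s X -> sol t Y ->
  forall x, qform X x <= qform Y x.
Proof.
move=> s_ge0 st t_le1 solX solY x.
have [c c_ge0 XA_le] := qform_le_posdef (A^T *m X *m A) pdQ.
have := riccati_sol_sub_le s_ge0 (lexx s) st (le_trans st t_le1) solX solY c_ge0 _ x.
by rewrite subrr !mul0r subr_le0; apply=> y; rewrite -qform_conj.
Qed.

Lemma riccati_sol_lipschitz q p P X' : 0 <= q -> q <= p -> p <= 1 -> sol q P -> sol p X' ->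
  exists2 c, 0 <= c & forall t X, 0 <= t -> t <= p -> sol t X ->
    forall x, `|qform (P - X) x| <= `|t - q| * c * qform P x.
Proof.
move=> q_ge0 qp p_le1 solP solX'.
have q_le1 := le_trans qp p_le1.
have [cP cP_ge0 PA_le] := qform_le_posdef (A^T *m P *m A) pdQ.
have [c' c'_ge0 X'A_le] := qform_le_posdef (A^T *m X' *m A) pdQ.
exists (cP + c') => [|t X t_ge0 tp solX x]; first exact: addr_ge0.
have P_ge0 := posdef_qform_ge0 x solP.1.
have X_ge0 := posdef_qform_ge0 x solX.1.
rewrite qformMB; have [tq|qt] := lerP t q.
- have XP := riccati_sol_mono t_ge0 tq q_le1 solX solP x.
  have PA_le' y : qform P (A *m y) <= cP * qform Q y by rewrite -qform_conj.
  have PX := riccati_sol_sub_le t_ge0 tq (lexx t) q_le1 solP solX cP_ge0 PA_le' x.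
  rewrite ger0_norm ?subr_ge0 //.
  have qt_ge0 : 0 <= q - t by rewrite subr_ge0.
  have PX_ge0 : 0 <= qform P x - qform X x by rewrite subr_ge0.
  have := mulr_ge0 (mulr_ge0 qt_ge0 cP_ge0) PX_ge0.
  have := mulr_ge0 (mulr_ge0 qt_ge0 c'_ge0) P_ge0.
  nra.
- have PX := riccati_sol_mono q_ge0 (ltW qt) (le_trans tp p_le1) solP solX x.
  have XA_le y : qform X (A *m y) <= c' * qform Q y.
    apply: le_trans (riccati_sol_mono t_ge0 tp p_le1 solX solX' (A *m y)) _.
    by rewrite -qform_conj.
  have XP := riccati_sol_sub_le q_ge0 (ltW qt) (lexx q) (le_trans tp p_le1) solX solP c'_ge0 XA_le x.
  rewrite ler0_norm ?subr_le0 //.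
  have tq_ge0 : 0 <= t - q by rewrite subr_ge0 ltW.
  have := mulr_ge0 (mulr_ge0 tq_ge0 cP_ge0) P_ge0.
  nra.
Qed.

End RiccatiSolutions.

Lemma cvg_within_dist_le {R : realType} {V : normedModType R} (D : set R)
    (f : R -> V) (q : R) (L : V) (K delta : R) : 0 < delta ->
  (forall t, D t -> `|t - q| < delta -> `|L - f t| <= K * `|t - q|) ->
  f t @[t --> within D (nbhs q)] --> L.
Proof.
move=> delta_gt0 f_le; apply/cvgrPdist_le => eps eps_gt0.
have K1_gt0 : 0 < `|K| + 1 by rewrite ltr_wpDl.
rewrite near_withinE; apply/nbhs_ballP.
exists (Num.min delta (eps / (`|K| + 1))) => /=; first by rewrite lt_min delta_gt0 divr_gt0.
move=> t; rewrite -ball_normE /= lt_min distrC => /andP[t_delta t_eps] Dt.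
rewrite ltr_pdivlMr // in t_eps.
apply: le_trans (f_le t Dt t_delta) _.
apply: le_trans (_ : `|K| * `|t - q| <= _); first by rewrite ler_wpM2r ?ler_norm.
have := normr_ge0 (t - q); nra.
Qed.

Theorem lemma4 (R : realType) (n m : nat)
  (A : 'M[R]_n) (B : 'M[R]_(n, m)) (Q : 'M[R]_n) (Rw : 'M[R]_m) (q qc : R)
  (hAB : stabilizable A B) (hQ : posdef Q) (hR : posdef Rw)
  (hq : 0 < q < 1)
  (hqc : forall p : R, 0 <= p < qc ->
           exists! X : 'M[R]_n, pd_solution A B Q Rw p X)
  (hqc1 : qc <= 1) (hqqc : q < qc)
  (P : 'M[R]_n) (hP : pd_solution A B Q Rw q P)
  (Phat : R -> 'M[R]_n)
  (hPhat : forall p : R, 0 <= p < qc -> pd_solution A B Q Rw p (Phat p)) :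
  Phat p @[p --> within [set p : R | 0 <= p < qc] (nbhs q)] --> P.
Proof.
have /andP[q_gt0 _] := hq.
pose p2 := (q + qc) / 2.
have [qp2 p2qc] : q < p2 /\ p2 < qc by rewrite /p2; split; lra.
have sol_Phat t : 0 <= t -> t <= p2 -> pd_solution A B Q Rw t (Phat t).
  by move=> t_ge0 tp2; apply: hPhat; rewrite t_ge0 (le_lt_trans tp2 p2qc).
have [c c_ge0 lipP] := riccati_sol_lipschitz hQ hR (ltW q_gt0) (ltW qp2)
  (le_trans (ltW p2qc) hqc1) hP (sol_Phat p2 (le_trans (ltW q_gt0) (ltW qp2)) (lexx p2)).
have [C C_ge0 normP] := mx_norm_le_qform hP.1.
apply: (cvg_within_dist_le (K := c * C) (_ : 0 < p2 - q)); first by rewrite subr_gt0.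
move=> t /andP[t_ge0 _] tq; have tp2 : t <= p2 by have := ler_norm (t - q); lra.
have solt := sol_Phat t t_ge0 tp2.
have symD : (P - Phat t)^T = P - Phat t by rewrite linearB /= hP.1.1 solt.1.1.
have k_ge0 : 0 <= `|t - q| * c by rewrite mulr_ge0.
apply: le_trans (normP _ _ symD k_ge0 (lipP t _ t_ge0 tp2 solt)) _.
by rewrite [c * C * _]mulrC mulrA.
Qed.
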